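(* Let $G$ be a group and $n\ge1$. Then $\bigcup_{i=1}^n\operatorname{Spec}_R(G)^{(i)}\subseteq\operatorname{Spec}_R(G^n)$. Equality holds if $\operatorname{Aut}(G^n)=\operatorname{Aut}(G)\wr S_n$, i.e. if every automorphism of $G^n$ is of the form $(g_1,\dots,g_n)\mapsto(\phi_1(g_{\sigma(1)}),\dots,\phi_n(g_{\sigma(n)}))$ for some $\phi_1,\dots,\phi_n\in\operatorname{Aut}(G)$ and $\sigma\in S_n$.
   Context: $R(\psi)$ is the Reidemeister number of an endomorphism $\psi$ (number of classes of the relation $x\sim gx\psi(g)^{-1}$), and $\operatorname{Spec}_R(A)=\{R(\psi)\mid\psi\in\operatorname{Aut}(A)\}$. For $S\subseteq\mathbb{N}\cup\{\infty\}$, $S^{(i)}=\{a_1\cdots a_i\mid a_j\in S\}$ is the $i$-fold product set, with the convention $a\cdot\infty=\infty$. *)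

From mathcomp Require Import all_boot all_fingroup.
Set Implicit Arguments. Unset Strict Implicit. Unset Printing Implicit Defensive.

Definition is_group (G : Type) (mul : G -> G -> G) (one : G) (inv : G -> G) :=
  [/\ (forall x y z, mul x (mul y z) = mul (mul x y) z),
      (forall x, mul one x = x), (forall x, mul x one = x),
      (forall x, mul (inv x) x = one) & (forall x, mul x (inv x) = one)].

Section Reid.
Variables (G : Type) (mul : G -> G -> G) (inv : G -> G).

Definition is_hom (f : G -> G) := forall x y, f (mul x y) = mul (f x) (f y).
Definition is_aut (f : G -> G) := is_hom f /\ bijective f.

Definition twisted (psi : G -> G) (x y : G) :=
  exists g, y = mul (mul g x) (inv (psi g)).

Definition n_classes (psi : G -> G) (n : nat) :=
  exists reps : 'I_n -> G,
    (forall i j, twisted psi (reps i) (reps j) -> i = j) /\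
    (forall x, exists i, twisted psi x (reps i)).

(* Reidemeister number R(psi) = r, with r : option nat (None = infinity) *)
Definition reid (psi : G -> G) (r : option nat) :=
  match r with
  | Some n => n_classes psi n
  | None => forall n, ~ n_classes psi n
  end.

Definition SpecR (r : option nat) := exists psi, is_aut psi /\ reid psi r.
End Reid.

Definition mulinf (a b : option nat) : option nat :=
  match a, b with
  | Some x, Some y => Some (x * y)
  | _, _ => None
  end.

(* S^(i) = { a_1 ... a_i | a_j in S } *)
Definition prodset (S : option nat -> Prop) (i : nat) (r : option nat) :=
  exists s : seq (option nat),
    size s = i /\ (forall j, j < size s -> S (nth None s j)) /\ r = foldr mulinf (Some 1) s.

(* pointwise group operations on G^n = 'I_n -> G *)
Definition pmul (G : Type) (mul : G -> G -> G) (n : nat) (x y : 'I_n -> G) : 'I_n -> G :=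
  fun k => mul (x k) (y k).
Definition pinv (G : Type) (inv : G -> G) (n : nat) (x : 'I_n -> G) : 'I_n -> G :=
  fun k => inv (x k).

Definition aut_wreath (G : Type) (mul : G -> G -> G) (n : nat) :=
  forall Phi : ('I_n -> G) -> ('I_n -> G), is_aut (@pmul G mul n) Phi ->
    exists (phi : 'I_n -> G -> G) (s : {perm 'I_n}),
      (forall k, is_aut mul (phi k)) /\ (forall x k, Phi x k = phi k (x (s k))).

From mathcomp Require Import all_boot all_fingroup.
From Stdlib Require Import Classical IndefiniteDescription FunctionalExtensionality.
Set Implicit Arguments. Unset Strict Implicit. Unset Printing Implicit Defensive.

(* An automorphism of [G^n] of wreath form [x |-> (phi_k (x_(s k)))_k] has
   as Reidemeister number the product, over the cycles of [s], of the
   Reidemeister numbers of the composites of the [phi_k] along the cycle.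
   Rather than naming cycles we use two local moves on the last coordinate:
   - split ([reid_wreath_split]): if [s] fixes it, [R] is [R(phi_max)]
     times the Reidemeister number of the remaining [n - 1] coordinates;
   - merge ([reid_wreath_merge]): otherwise it is absorbed into the
     coordinate mapped onto it by composing the two automorphisms, and [R]
     does not change.
   Iterating, every wreath automorphism has [R] in a product of at most [n]
   elements of [Spec_R(G)] ([reid_wreath_factor]); conversely a diagonal
   automorphism realizes a product of [i] factors on [G^i], and merging
   identity coordinates pads [i] up to [n] ([reid_wreath_realize]).  Under [Aut(G^n) = Aut(G) wr S_n] every automorphism is a wreath
   automorphism, which gives the reverse inclusion. *)

(* The number of classes of an arbitrary relation [E] on [X]: [E] has
   exactly [n] classes if it has a complete, irredundant system of [n]
   representatives.  [reid psi] is (convertibly) [class_number] of twisted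
   conjugacy by [psi]; the generality is needed for product relations. *)
Definition has_n_classes (X : Type) (E : X -> X -> Prop) (n : nat) :=
  exists reps : 'I_n -> X,
    (forall i j, E (reps i) (reps j) -> i = j) /\ (forall x, exists i, E x (reps i)).

Definition class_number (X : Type) (E : X -> X -> Prop) (r : option nat) :=
  match r with
  | Some n => has_n_classes E n
  | None => forall n, ~ has_n_classes E n
  end.

Definition is_equivalence (X : Type) (E : X -> X -> Prop) :=
  [/\ forall x, E x x, forall x y, E x y -> E y x
    & forall x y z, E x y -> E y z -> E x z].

Section ClassCounting.
Variables (X : Type) (E : X -> X -> Prop).

Lemma class_number_exists : exists r, class_number E r.
Proof.
have [[n Hn]|Hfin] := classic (exists n, has_n_classes E n); first by exists (Some n).
by exists None => n Hn; apply: Hfin; exists n.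
Qed.

Lemma has_card_classes (T : finType) (reps : T -> X) :
  (forall i j, E (reps i) (reps j) -> i = j) -> (forall x, exists i, E x (reps i)) ->
  has_n_classes E #|T|.
Proof.
move=> irr cov; exists (reps \o enum_val); split=> [i j /irr/enum_val_inj //|x].
by have [t Ht] := cov x; exists (enum_rank t); rewrite /= enum_rankK.
Qed.

Hypothesis eqE : is_equivalence E.

(* Sending each representative of one system to the one of its class in
   another system is injective, so any two systems have the same size. *)
Lemma has_n_classes_le a b : has_n_classes E a -> has_n_classes E b -> a <= b.
Proof.
case: eqE => _ Esym Etrans [ra [irr_a _]] [rb [_ cov_b]].
pose f (i : 'I_a) : 'I_b := proj1_sig (constructive_indefinite_description _ (cov_b (ra i))).
have Hf i : E (ra i) (rb (f i)) by rewrite /f; case: constructive_indefinite_description.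
have inj_f : injective f.
  by move=> i j fij; apply: irr_a; apply: Etrans (Hf i) _; rewrite fij; apply: Esym.
by have := @leq_card _ _ f inj_f; rewrite !card_ord.
Qed.

Lemma class_number_unique r1 r2 : class_number E r1 -> class_number E r2 -> r1 = r2.
Proof.
case: r1 r2 => [a|] [b|] //= H1 H2; [|by case: (H2 a)|by case: (H1 b)].
by congr Some; apply/eqP; rewrite eqn_leq !has_n_classes_le.
Qed.

(* Finitely many elements meeting every class: then there are finitely
   many classes (drop redundant elements one at a time). *)
Lemma finite_cover_classes N (f : 'I_N -> X) :
  (forall x, exists i, E x (f i)) -> exists m, has_n_classes E m.
Proof.
case: eqE => _ Esym Etrans; elim: N f => [|N IH] f cov; first by exists 0, f; split; [case|].
have [irr|] := classic (forall i j, E (f i) (f j) -> i = j); first by exists N.+1, f.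
move=> /not_all_ex_not [i]; move=> /not_all_ex_not [j] nEij.
have [Eij nij] := imply_to_and _ _ nEij.
apply: (IH (f \o lift i)) => x; have [m Hm] := cov x.
have [m' eqm|eqm] := unliftP i m; first by exists m'; rewrite /= -eqm.
have [j' eqj|eqj] := unliftP i j; last by case: nij; rewrite eqj.
by exists j'; rewrite /= -eqj; apply: Etrans Hm _; rewrite eqm.
Qed.
End ClassCounting.

Lemma class_number_pullback (X Y : Type) (E : X -> X -> Prop) (E' : Y -> Y -> Prop)
    (f : X -> Y) (g : Y -> X) :
  cancel g f -> (forall x x', E x x' <-> E' (f x) (f x')) ->
  forall r, class_number E' r -> class_number E r.
Proof.
move=> gK Ef.
have same n : has_n_classes E n <-> has_n_classes E' n.
  split=> [[r [irr cov]]|[r [irr cov]]].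
  - exists (f \o r); split=> [i j /Ef|y]; first exact: irr.
    by have [i Hi] := cov (g y); exists i; rewrite /= -[y]gK; apply/Ef.
  - exists (g \o r); split=> [i j /Ef|x]; first by rewrite !gK; apply: irr.
    by have [i Hi] := cov (f x); exists i; apply/Ef; rewrite /= gK.
by case=> [n /same|H n /same] //; apply: H.
Qed.

Definition prod_rel (A B : Type) (EA : A -> A -> Prop) (EB : B -> B -> Prop) (x y : A * B) :=
  EA x.1 y.1 /\ EB x.2 y.2.

(* The class number of a product relation is the product of the class
   numbers, with the convention [a * oo = oo]; the inhabitants [a0], [b0]
   project a finite system on the product to finite covers of the factors. *)
Lemma class_number_prod (A B : Type) (EA : A -> A -> Prop) (EB : B -> B -> Prop)
    (a0 : A) (b0 : B) :
  is_equivalence EA -> is_equivalence EB -> forall ra rb,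
  class_number EA ra -> class_number EB rb -> class_number (prod_rel EA EB) (mulinf ra rb).
Proof.
move=> eqA eqB [a|] rb HA HB; last first.
  move=> N [r [_ cov]].
  have [|m Hm] := @finite_cover_classes _ _ eqA N (fun i => (r i).1); last exact: HA Hm.
  by move=> x; have [i [Hi _]] := cov (x, b0); exists i.
case: rb HB => [b|] /= HB.
- move: HA HB => [fa [ia ca]] [fb [ib cb]].
  rewrite -[a]card_ord -[b]card_ord -card_prod.
  apply: (@has_card_classes _ _ _ (fun p => (fa p.1, fb p.2))).
    by move=> [i j] [i' j'] [/= /ia -> /ib ->].
  by move=> [x y]; have [i Hi] := ca x; have [j Hj] := cb y; exists (i, j).
- move=> N [r [_ cov]].
  have [|m Hm] := @finite_cover_classes _ _ eqB N (fun i => (r i).2); last exact: HB Hm.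
  by move=> y; have [i [_ Hi]] := cov (a0, y); exists i.
Qed.

Section GroupFacts.
Variables (G : Type) (mul : G -> G -> G) (one : G) (inv : G -> G).
Hypothesis HG : is_group mul one inv.
Local Notation "x * y" := (mul x y).
Local Notation "x ^-1" := (inv x).

Lemma grp_mulA x y z : x * (y * z) = (x * y) * z. Proof. by case: HG. Qed.
Lemma grp_mul1l x : one * x = x. Proof. by case: HG. Qed.
Lemma grp_mul1r x : x * one = x. Proof. by case: HG. Qed.
Lemma grp_mulVl x : x^-1 * x = one. Proof. by case: HG. Qed.
Lemma grp_mulVr x : x * x^-1 = one. Proof. by case: HG. Qed.

Lemma grp_mulKl x y : x^-1 * (x * y) = y.
Proof. by rewrite grp_mulA grp_mulVl grp_mul1l. Qed.
Lemma grp_mulKr x y : (y * x) * x^-1 = y.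
Proof. by rewrite -grp_mulA grp_mulVr grp_mul1r. Qed.
Lemma grp_mulKVr x y : (y * x^-1) * x = y.
Proof. by rewrite -grp_mulA grp_mulVl grp_mul1r. Qed.

Lemma grp_inv_unique x y : x * y = one -> y = x^-1.
Proof. by move=> xy1; rewrite -(grp_mulKl x y) xy1 grp_mul1r. Qed.

Lemma grp_invM x y : (x * y)^-1 = y^-1 * x^-1.
Proof.
symmetry; apply: grp_inv_unique.
by rewrite -grp_mulA (grp_mulA y) grp_mulVr grp_mul1l grp_mulVr.
Qed.
Lemma grp_invK x : (x^-1)^-1 = x.
Proof. by symmetry; apply: grp_inv_unique; rewrite grp_mulVl. Qed.
Lemma grp_inv1 : one^-1 = one.
Proof. by symmetry; apply: grp_inv_unique; rewrite grp_mul1l. Qed.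

Section Homomorphism.
Variable f : G -> G.
Hypothesis hom_f : is_hom mul f.

Lemma hom_one : f one = one.
Proof. by rewrite -(grp_mulKl (f one) (f one)) -hom_f grp_mul1l grp_mulVl. Qed.

Lemma hom_inv x : f (x^-1) = (f x)^-1.
Proof. by apply: grp_inv_unique; rewrite -hom_f grp_mulVr hom_one. Qed.

Lemma twisted_equiv : is_equivalence (twisted mul inv f).
Proof.
split.
- by move=> x; exists one; rewrite hom_one grp_inv1 grp_mul1l grp_mul1r.
- by move=> x y [g ->]; exists g^-1; rewrite hom_inv grp_invK grp_mulA grp_mulKl grp_mulKVr.
- by move=> x y z [g ->] [h ->]; exists (h * g); rewrite hom_f grp_invM !grp_mulA.
Qed.

Lemma reid_unique r1 r2 : reid mul inv f r1 -> reid mul inv f r2 -> r1 = r2.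
Proof. exact: (class_number_unique twisted_equiv). Qed.
End Homomorphism.
End GroupFacts.

Definition extend_last (T : Type) n (a : T) (y : 'I_n -> T) (k : 'I_n.+1) : T :=
  if unlift ord_max k is Some l then y l else a.

Lemma extend_last_max (T : Type) n (a : T) (y : 'I_n -> T) : extend_last a y ord_max = a.
Proof. by rewrite /extend_last unlift_none. Qed.

Lemma extend_last_lift (T : Type) n (a : T) (y : 'I_n -> T) l :
  extend_last a y (lift ord_max l) = y l.
Proof. by rewrite /extend_last liftK. Qed.

Definition fix_last n (s : 'I_n -> 'I_n) : 'I_n.+1 -> 'I_n.+1 :=
  extend_last ord_max (fun l => lift ord_max (s l)).

Lemma fix_last_max n (s : 'I_n -> 'I_n) : fix_last s ord_max = ord_max.
Proof. exact: extend_last_max. Qed.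

Lemma fix_last_lift n (s : 'I_n -> 'I_n) l : fix_last s (lift ord_max l) = lift ord_max (s l).
Proof. exact: extend_last_lift. Qed.

Lemma fix_last_inj n (s : 'I_n -> 'I_n) : injective s -> injective (fix_last s).
Proof.
move=> inj_s a b.
have [a' ->|->] := unliftP ord_max a; have [b' ->|->] := unliftP ord_max b;
  rewrite ?fix_last_lift ?fix_last_max // => E.
- by rewrite (inj_s _ _ (lift_inj E)).
- by have := neq_lift ord_max (s a'); rewrite E eqxx.
- by have := neq_lift ord_max (s b'); rewrite -E eqxx.
Qed.

Lemma restrict_fixed_last n (u : 'I_n.+1 -> 'I_n.+1) :
  injective u -> u ord_max = ord_max ->
  exists2 s : 'I_n -> 'I_n, injective s & u =1 fix_last s.
Proof.
move=> inj_u u_max.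
have max_u l : ord_max != u (lift ord_max l).
  by rewrite -[X in X != _]u_max (inj_eq inj_u) neq_lift.
pose s l := sval (unlift_some (max_u l)).
have u_lift l : u (lift ord_max l) = lift ord_max (s l) by rewrite /s; case: unlift_some.
exists s => [a b E|k]; first by apply/(@lift_inj _ ord_max)/inj_u; rewrite !u_lift E.
by have [l ->|->] := unliftP ord_max k; rewrite ?fix_last_lift ?fix_last_max.
Qed.

Lemma aut_comp (G : Type) (mul : G -> G -> G) (f g : G -> G) :
  is_aut mul f -> is_aut mul g -> is_aut mul (f \o g).
Proof.
move=> [hom_f bij_f] [hom_g bij_g]; split; last exact: bij_comp.
by move=> x y; rewrite /= hom_g hom_f.
Qed.

Lemma aut_id (G : Type) (mul : G -> G -> G) : is_aut mul id.
Proof. by split=> //; exists id. Qed.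

Lemma extend_last_forall (T : Type) (P : T -> Prop) n (a : T) (y : 'I_n -> T) :
  P a -> (forall l, P (y l)) -> forall k, P (extend_last a y k).
Proof. by move=> Pa Py k; rewrite /extend_last; case: unlift. Qed.

Definition wreath (G : Type) n (s : 'I_n -> 'I_n) (phi : 'I_n -> G -> G)
    (x : 'I_n -> G) : 'I_n -> G :=
  fun k => phi k (x (s k)).

Section Wreath.
Variables (G : Type) (mul : G -> G -> G) (one : G) (inv : G -> G).
Hypothesis HG : is_group mul one inv.
Local Notation "x * y" := (mul x y).
Local Notation "x ^-1" := (inv x).
Local Notation pmulG n := (@pmul G mul n).
Local Notation pinvG n := (@pinv G inv n).

Lemma power_group n : is_group (pmulG n) (fun _ => one) (pinvG n).
Proof.
split=> *; apply: functional_extensionality => k; rewrite /pmul /pinv /=.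
- exact: (grp_mulA HG).
- exact: (grp_mul1l HG).
- exact: (grp_mul1r HG).
- exact: (grp_mulVl HG).
- exact: (grp_mulVr HG).
Qed.

Lemma twisted_power n F (x y : 'I_n -> G) :
  twisted (pmulG n) (pinvG n) F x y <-> exists g, forall k, y k = g k * x k * (F g k)^-1.
Proof.
split=> [[g ->]|[g Hg]]; exists g => //.
by apply: functional_extensionality => k; rewrite Hg.
Qed.

Lemma wreath_hom n s (phi : 'I_n -> G -> G) :
  (forall k, is_hom mul (phi k)) -> is_hom (pmulG n) (wreath s phi).
Proof.
by move=> hom_phi x y; apply: functional_extensionality => k; rewrite /wreath /pmul hom_phi.
Qed.

(* Inverting each [phi_k] and the index map [s] inverts [wreath s phi]. *)
Lemma wreath_bij n (s : 'I_n -> 'I_n) (phi : 'I_n -> G -> G) :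
  injective s -> (forall k, bijective (phi k)) -> bijective (wreath s phi).
Proof.
move=> inj_s bij_phi.
have inv_phi k : {psi | cancel (phi k) psi /\ cancel psi (phi k)}.
  by apply: constructive_indefinite_description; case: (bij_phi k) => psi; exists psi.
pose psi k := proj1_sig (inv_phi k).
have psiK k : cancel (phi k) (psi k) by rewrite /psi; case: (inv_phi k) => ? [].
have phiK k : cancel (psi k) (phi k) by rewrite /psi; case: (inv_phi k) => ? [].
exists (fun y m => psi (invF inj_s m) (y (invF inj_s m))) => x;
  apply: functional_extensionality => k; by rewrite /wreath ?f_invF ?psiK ?invF_f ?phiK.
Qed.

Lemma wreath_aut n (s : 'I_n -> 'I_n) (phi : 'I_n -> G -> G) :
  injective s -> (forall k, is_aut mul (phi k)) -> is_aut (pmulG n) (wreath s phi).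
Proof.
move=> inj_s aut_phi; split; first by apply: wreath_hom => k; case: (aut_phi k).
by apply: wreath_bij => // k; case: (aut_phi k).
Qed.

(* [G^0] is trivial, so any of its endomorphisms has one twisted class. *)
Lemma reid_power0 F : reid (pmulG 0) (pinvG 0) F (Some 1).
Proof.
exists (fun _ _ => one); split=> [i j _|x]; first by rewrite (ord1 i) (ord1 j).
by exists ord0, (fun _ => one); apply: functional_extensionality => -[].
Qed.

(* Splitting off a fixed coordinate: if [s] fixes [ord_max], the twisted
   classes of [wreath s phi] are pairs of twisted classes of [phi ord_max]
   on [G] and of the restricted automorphism on [G^n]. *)
Lemma reid_wreath_split n (s : 'I_n.+1 -> 'I_n.+1) (phi : 'I_n.+1 -> G -> G)
    (s' : 'I_n -> 'I_n) :
  (forall k, is_hom mul (phi k)) -> s =1 fix_last s' ->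
  forall r1 r2, reid mul inv (phi ord_max) r1 ->
  reid (pmulG n) (pinvG n) (wreath s' (fun l => phi (lift ord_max l))) r2 ->
  reid (pmulG n.+1) (pinvG n.+1) (wreath s phi) (mulinf r1 r2).
Proof.
move=> hom_phi sE r1 r2 R1 R2.
have s_max : s ord_max = ord_max by rewrite sE fix_last_max.
have s_lift l : s (lift ord_max l) = lift ord_max (s' l) by rewrite sE fix_last_lift.
have := class_number_prod one (fun _ => one) (twisted_equiv HG (hom_phi ord_max))
  (twisted_equiv (power_group n) (wreath_hom s' (fun l => hom_phi _))) R1 R2.
apply: (@class_number_pullback _ _ _ _ (fun x => (x ord_max, fun l => x (lift ord_max l)))
   (fun p => extend_last p.1 p.2)).
  case=> a y /=; rewrite extend_last_max; congr pair.
  by apply: functional_extensionality => l; rewrite extend_last_lift.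
move=> x x'; rewrite twisted_power; split.
  case=> g Hg; split=> /=; first by exists (g ord_max); rewrite Hg /wreath s_max.
  by apply/twisted_power; exists (fun l => g (lift ord_max l)) => l; rewrite Hg /wreath s_lift.
case=> /= [[g1 Hg1] /twisted_power [g2 Hg2]].
exists (extend_last g1 g2) => k; have [l ->|->] := unliftP ord_max k.
  by rewrite Hg2 /wreath s_lift !extend_last_lift.
by rewrite Hg1 /wreath s_max extend_last_max.
Qed.

(* Merging a coordinate into its cycle: if [s] sends [lift j] to [ord_max]
   and [ord_max] to [lift (s' j)] (i.e. [s] composed with the transposition
   of [ord_max] and [lift j] is [fix_last s']), then coordinate [ord_max] can be
   absorbed into coordinate [j] by composing [phi (lift j)] with
   [phi ord_max], without changing the Reidemeister number.  The map
   [x |-> (x_(lift j) * phi_(lift j) (x_max), other x_(lift l))] identifies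
   the twisted classes. *)
Lemma reid_wreath_merge n (s : 'I_n.+2 -> 'I_n.+2) (phi : 'I_n.+2 -> G -> G)
    (s' : 'I_n.+1 -> 'I_n.+1) (phi' : 'I_n.+1 -> G -> G) (j : 'I_n.+1) :
  (forall k, is_hom mul (phi k)) ->
  (forall k, s (tperm ord_max (lift ord_max j) k) = fix_last s' k) ->
  (forall a, phi' j a = phi (lift ord_max j) (phi ord_max a)) ->
  (forall l a, l != j -> phi' l a = phi (lift ord_max l) a) ->
  forall r, reid (pmulG n.+1) (pinvG n.+1) (wreath s' phi') r ->
  reid (pmulG n.+2) (pinvG n.+2) (wreath s phi) r.
Proof.
move=> hom_phi sE phi'_j phi'_lift.
have s_j : s (lift ord_max j) = ord_max by have := sE ord_max; rewrite tpermL fix_last_max.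
have s_max : s ord_max = lift ord_max (s' j).
  by have := sE (lift ord_max j); rewrite tpermR fix_last_lift.
have s_lift l : l != j -> s (lift ord_max l) = lift ord_max (s' l).
  move=> nlj; have := sE (lift ord_max l); rewrite fix_last_lift tpermD ?neq_lift //.
  by rewrite (inj_eq (@lift_inj _ _)) eq_sym.
have hom_inv k := hom_inv HG (hom_phi k).
apply: (@class_number_pullback _ _ _ _
  (fun x l => if l == j then x (lift ord_max j) * phi (lift ord_max j) (x ord_max)
              else x (lift ord_max l))
  (extend_last one)).
  move=> y; apply: functional_extensionality => l.
  by case: eqP => [->|_]; rewrite extend_last_lift // extend_last_max
    (hom_one HG (hom_phi _)) (grp_mul1r HG).
move=> x y; rewrite !twisted_power; split.
  case=> g Hg; exists (fun l => g (lift ord_max l)) => l.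
  case: (eqVneq l j) => [->|nl]; last by rewrite Hg /wreath s_lift // phi'_lift.
  rewrite /wreath phi'_j -s_max !Hg /wreath s_j !hom_phi hom_inv.
  by rewrite !(grp_mulA HG) (grp_mulKVr HG).
case=> g' Hg'.
exists (extend_last (y ord_max * phi ord_max (g' (s' j)) * (x ord_max)^-1) g') => k.
have [l ->|->] := unliftP ord_max k; last first.
  by rewrite /wreath s_max !extend_last_lift extend_last_max (grp_mulKVr HG) (grp_mulKr HG).
rewrite /wreath extend_last_lift; case: (eqVneq l j) => [->|nl].
  have := Hg' j; rewrite eqxx /wreath phi'_j => E.
  rewrite s_j extend_last_max.
  rewrite -[y (lift ord_max j)](grp_mulKr HG (phi (lift ord_max j) (y ord_max))) E.
  by rewrite !hom_phi !hom_inv !(grp_invM HG) !(grp_invK HG) !(grp_mulA HG).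
by have := Hg' l; rewrite (negbTE nl) /wreath => ->; rewrite s_lift // extend_last_lift phi'_lift.
Qed.

(* Every automorphism in [Aut(G) wr S_n] has as Reidemeister number a
   product of at most [n] elements of [Spec_R(G)], of at least one if
   [n > 0]: split off a fixed last coordinate, or otherwise merge it into
   its cycle, and recurse. *)
Lemma reid_wreath_factor n (s : 'I_n -> 'I_n) (phi : 'I_n -> G -> G) :
  injective s -> (forall k, is_aut mul (phi k)) ->
  exists l : seq (option nat), [/\ size l <= n, 0 < n -> 0 < size l,
    forall i, i < size l -> SpecR mul inv (nth None l i) &
    reid (pmulG n) (pinvG n) (wreath s phi) (foldr mulinf (Some 1) l)].
Proof.
elim: n s phi => [|n IH] s phi inj_s aut_phi.
  by exists [::]; split=> //; apply: reid_power0.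
have hom_phi k := (aut_phi k).1.
have [s_max|s_max] := eqVneq (s ord_max) ord_max.
  have [s' inj_s' sE] := restrict_fixed_last inj_s s_max.
  have [l [size_l _ spec_l R_l]] := IH s' _ inj_s' (fun l => aut_phi (lift ord_max l)).
  have [r R_r] := class_number_exists (twisted mul inv (phi ord_max)).
  exists (r :: l); split=> //; first by case=> [_|i /spec_l]//; exists (phi ord_max).
  exact: reid_wreath_split sE _ _ R_r R_l.
case: n IH s phi inj_s aut_phi hom_phi s_max => [|n] IH s phi inj_s aut_phi hom_phi s_max.
  by move: s_max; rewrite [s _]ord1 [ord_max]ord1 eqxx.
have max_j0 : ord_max != invF inj_s ord_max.
  by apply: contra_neq s_max => E; rewrite {1}E f_invF.
have [j j0E _] := unlift_some max_j0.
pose tau := tperm ord_max (lift ord_max j).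
have [|s' inj_s' sE] := @restrict_fixed_last _ (s \o tau) (inj_comp inj_s (@perm_inj _ tau)).
  by rewrite /= tpermL -j0E f_invF.
pose phi' l := if l == j then phi (lift ord_max j) \o phi ord_max else phi (lift ord_max l).
have aut_phi' l : is_aut mul (phi' l).
  by rewrite /phi'; case: eqP => _; [apply: aut_comp|].
have [l [size_l pos_l spec_l R_l]] := IH s' phi' inj_s' aut_phi'.
exists l; split=> //; first exact: leqW.
apply: (reid_wreath_merge hom_phi sE) R_l => [a|l' a nl']; rewrite /phi' ?eqxx //.
by rewrite (negbTE nl').
Qed.

Lemma reid_wreath_diag (l : seq (option nat)) :
  (forall i, i < size l -> SpecR mul inv (nth None l i)) ->
  exists2 phi : 'I_(size l) -> G -> G, forall k, is_aut mul (phi k) &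
    reid (pmulG (size l)) (pinvG (size l)) (wreath id phi) (foldr mulinf (Some 1) l).
Proof.
elim: l => [|r l IH] spec_l.
  by exists (fun _ => id) => [_|]; [apply: aut_id | apply: reid_power0].
have [phi aut_phi R_l] := IH (fun i => spec_l i.+1).
have [psi [aut_psi R_r]] := spec_l 0 isT.
have aut_ext := extend_last_forall aut_psi aut_phi.
exists (extend_last psi phi) => //.
apply: (@reid_wreath_split _ _ _ id).
- by move=> k; case: (aut_ext k).
- by move=> k; have [l' ->|->] := unliftP ord_max k; rewrite ?fix_last_lift ?fix_last_max.
- by rewrite extend_last_max.
- suff -> : (fun l' => extend_last psi phi (lift ord_max l')) = phi by [].
  by apply: functional_extensionality => l'; rewrite extend_last_lift.
Qed.

(* Padding: adding a coordinate on which the automorphism acts by the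
   identity, merged into an existing cycle, keeps the Reidemeister number. *)
Lemma reid_wreath_pad n (s' : 'I_n.+1 -> 'I_n.+1) (phi' : 'I_n.+1 -> G -> G) r :
  injective s' -> (forall k, is_aut mul (phi' k)) ->
  reid (pmulG n.+1) (pinvG n.+1) (wreath s' phi') r ->
  exists (s : 'I_n.+2 -> 'I_n.+2) (phi : 'I_n.+2 -> G -> G),
    [/\ injective s, forall k, is_aut mul (phi k) &
        reid (pmulG n.+2) (pinvG n.+2) (wreath s phi) r].
Proof.
move=> inj_s' aut_phi' R_r.
pose tau : {perm 'I_n.+2} := tperm ord_max (lift ord_max ord0).
have aut_ext := extend_last_forall (aut_id mul) aut_phi'.
exists (fix_last s' \o tau), (extend_last id phi'); split=> //.
  exact: inj_comp (fix_last_inj inj_s') (@perm_inj _ tau).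
apply: (reid_wreath_merge (s' := s') (phi' := phi') (j := ord0)) R_r.
- by move=> k; case: (aut_ext k).
- by move=> k; rewrite /= tpermK.
- by move=> a; rewrite extend_last_lift extend_last_max.
- by move=> l a _; rewrite extend_last_lift.
Qed.

Lemma reid_wreath_realize n (l : seq (option nat)) :
  0 < size l <= n -> (forall i, i < size l -> SpecR mul inv (nth None l i)) ->
  exists (s : 'I_n -> 'I_n) (phi : 'I_n -> G -> G),
    [/\ injective s, forall k, is_aut mul (phi k) &
        reid (pmulG n) (pinvG n) (wreath s phi) (foldr mulinf (Some 1) l)].
Proof.
move=> /andP [pos_l]; elim: n => [|n IH] size_l spec_l.
  by rewrite ltnNge size_l in pos_l.
have [<-|ne_l] := eqVneq (size l) n.+1.
  by have [phi aut_phi R_l] := reid_wreath_diag spec_l; exists id, phi; split=> //; apply: inj_id.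
have size_ln : size l <= n by rewrite -ltnS ltn_neqAle ne_l size_l.
have [s' [phi' [inj_s' aut_phi' R_l]]] := IH size_ln spec_l.
case: n {IH size_l ne_l} size_ln s' phi' inj_s' aut_phi' R_l => [|n] size_ln s' phi'.
  by rewrite ltnNge size_ln in pos_l.
exact: reid_wreath_pad.
Qed.
End Wreath.

Theorem mainTheorem6 (G : Type) (mul : G -> G -> G) (one : G) (inv : G -> G)
  (HG : is_group mul one inv) (n : nat) (hn : 1 <= n) :
  (forall r, (exists i, 1 <= i <= n /\ prodset (SpecR mul inv) i r) ->
     SpecR (@pmul G mul n) (@pinv G inv n) r) /\
  (aut_wreath mul n ->
   forall r, SpecR (@pmul G mul n) (@pinv G inv n) r ->
     exists i, 1 <= i <= n /\ prodset (SpecR mul inv) i r).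
Proof.
split=> [r [i [size_l [l [size_lE [spec_l ->]]]]]|aut_wr r [Psi [aut_Psi R_Psi]]].
  rewrite -size_lE in size_l.
  have [s [phi [inj_s aut_phi R_l]]] := reid_wreath_realize HG size_l spec_l.
  by exists (wreath s phi); split; first exact: wreath_aut.
have [phi [s [aut_phi PsiE]]] := aut_wr Psi aut_Psi.
have [l [size_l pos_l spec_l R_l]] := reid_wreath_factor HG (@perm_inj _ s) aut_phi.
exists (size l); rewrite pos_l // size_l; split=> //; exists l; split=> //; split=> //.
have wreathE : Psi = wreath s phi.
  by do 2!apply: functional_extensionality => ?; rewrite PsiE.
rewrite wreathE in R_Psi.
have hom_wreath := wreath_hom s (fun k => (aut_phi k).1).
exact: (reid_unique (power_group HG n) hom_wreath R_Psi R_l).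
Qed.
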